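(* Let $X$ be a Banach space and $C>0$. The following assertions are equivalent. (1) For every Banach space $Y$ and every bounded linear operator $T\colon X\to Y$, $\gamma(T^* )\leq C\cdot\operatorname{uc}(T)$. (1') For every bounded linear operator $T\colon X\to\ell^\infty$, $\gamma(T^* )\leq C\cdot\operatorname{uc}(T)$. (2) For every bounded set $K\subset X^*$, $\gamma(K)\leq C\cdot\eta(K)$.
   Context: Scalars may be real or complex. For a bounded sequence $(y_n)$ in a Banach space, $\operatorname{ca}((y_n))=\inf_{n\in\mathbb N}\sup\{\|y_k-y_l\|: k,l\geq n\}$. For a bounded linear operator $T\colon X\to Y$, $$\operatorname{uc}(T)=\sup\Big\{\operatorname{ca}\Big(\big(\textstyle\sum_{i=1}^n Tx_i\big)_n\Big):\ (x_n)\subset X,\ \sup_{x^*\in B_{X^*}}\sum_{n=1}^\infty|x^*(x_n)|\leq 1\Big\}.$$ For a bounded subset $A$ of a Banach space $E$, $\gamma(A)=\sup\{|\lim_n\lim_m x^*_m(x_n)-\lim_m\lim_n x^*_m(x_n)|\}$, the supremum taken over all sequences $(x_n)$ in $A$ and $(x_m^* )$ in $B_{E^*}$ for which the iterated limits exist. For the adjoint $T^*\colon Y^*\to X^*$, $\gamma(T^* )=\gamma(T^*(B_{Y^*}))$ computed in $X^*$. For a bounded $K\subset X^*$, $$\eta(K)=\sup\Big\{\limsup_n\sup_{x^*\in K}|x^*(x_n)|:\ (x_n)\subset X,\ \sup_{x^*\in B_{X^*}}\sum_{n=1}^\infty|x^*(x_n)|\leq 1\Big\},$$ and $\gamma(K)$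 is computed in $X^*$. *)

From HB Require Import structures.
From mathcomp Require Import all_boot all_order all_algebra.
From mathcomp Require Import all_classical all_reals all_analysis.
From mathcomp Require Export complex.
Export numFieldNormedType.Exports.

Unset Printing Implicit Defensive.

Import Order.TTheory GRing.Theory Num.Theory.
Local Open Scope classical_set_scope.
Local Open Scope ring_scope.

(* Scalars: a numFieldType K (instantiated with R or R[i] in the statement),
   together with nK : K -> R which turns the (real-valued) norms/moduli living
   in K into genuine reals (nK = id for K = R, nK = Re for K = R[i]). *)
Section BanachQuantities.
Variables (R : realType) (K : numFieldType) (nK : K -> R).

Definition linear_on (Y : lmodType K) (S : set Y) (g : Y -> K) : Prop :=
  forall (a : K) (y z : Y), S y -> S z -> g (a *: y + z) = a * g y + g z.

Definition dual_ball_on (Y : lmodType K) (S : set Y) (nY : Y -> R)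
  : set (Y -> K) :=
  [set g | linear_on Y S g /\ forall y, S y -> nK `|g y| <= nY y].

Definition dual_ball (X : normedModType K) : set (X -> K) :=
  dual_ball_on X setT (fun x => nK `|x|).

Definition dual_space (X : normedModType K) : set (X -> K) :=
  [set f | linear_on X setT f /\ exists M : R, forall x, nK `|f x| <= M * nK `|x|].

Definition dual_norm (X : normedModType K) (f : X -> K) : R :=
  sup [set nK `|f x| | x in [set x : X | nK `|x| <= 1]].

Definition bidual_ball (X : normedModType K) : set ((X -> K) -> K) :=
  dual_ball_on (X -> K) (dual_space X) (dual_norm X).

(* bounded linear operators (linearity is given by the type {linear _ -> _}) *)
Definition bounded_op (X Y : normedModType K) (T : X -> Y) : Prop :=
  exists M : R, forall x, nK `|T x| <= M * nK `|x|.

Definition wuc (X : normedModType K) (x : nat -> X) : Prop :=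
  forall f, dual_ball X f -> (\sum_(0 <= n <oo) (nK `|f (x n)|)%:E <= 1)%E.

Definition ca (Y : zmodType) (nY : Y -> R) (y : nat -> Y) : \bar R :=
  ereal_inf [set ereal_sup [set (nY (y kl.1 - y kl.2))%:E
                           | kl in [set kl : nat * nat | (n <= kl.1)%N /\ (n <= kl.2)%N]]
            | n in [set: nat]].

Definition uc (X : normedModType K) (Y : zmodType) (nY : Y -> R) (T : X -> Y)
  : \bar R :=
  ereal_sup [set ca Y nY (fun n => \sum_(i < n.+1) T (x i)) | x in [set x | wuc X x]].

Definition iter_lims (u : nat -> nat -> K) (a1 a2 : K) : Prop :=
  exists L1 L2 : nat -> K,
    (forall n, u n @ \oo --> L1 n) /\ (L1 @ \oo --> a1) /\
    (forall m, (fun n => u n m) @ \oo --> L2 m) /\ (L2 @ \oo --> a2).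

(* gamma(A) for A a subset of a space E whose dual unit ball is Bd *)
Definition gamma_in (E : Type) (Bd : set (E -> K)) (A : set E) : \bar R :=
  ereal_sup [set r | exists (x : nat -> E) (phi : nat -> E -> K) (a1 a2 : K),
               (forall n, A (x n)) /\ (forall m, Bd (phi m)) /\
               iter_lims (fun n m => phi m (x n)) a1 a2 /\
               r = (nK `|a1 - a2|)%:E].

Definition gamma_dual (X : normedModType K) (A : set (X -> K)) : \bar R :=
  gamma_in (X -> K) (bidual_ball X) A.

Definition eta (X : normedModType K) (A : set (X -> K)) : \bar R :=
  ereal_sup [set limn_esup (fun n => ereal_sup [set (nK `|f (x n)|)%:E | f in A])
            | x in [set x | wuc X x]].

Definition bounded_dual_set (X : normedModType K) (A : set (X -> K)) : Prop :=
  (forall f, A f -> linear_on X setT f) /\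
  exists M : R, forall f x, A f -> nK `|f x| <= M * nK `|x|.

(* l^infty over K, modelled inside nat -> K *)
Definition linf_set : set (nat -> K) :=
  [set y | exists M : R, forall n, nK `|y n| <= M].
Definition linf_norm (y : nat -> K) : R := sup (range (fun n => nK `|y n|)).

Definition assertion1 (X : completeNormedModType K) (C : R) : Prop :=
  forall (Y : completeNormedModType K) (T : {linear X -> Y}),
    bounded_op X Y T ->
    (gamma_dual X [set g \o T | g in dual_ball Y]
       <= C%:E * uc X Y (fun y : Y => nK `|y|) T)%E.

Definition assertion1' (X : completeNormedModType K) (C : R) : Prop :=
  forall T : {linear X -> (nat -> K)},
    (exists M : R, forall x n, nK `|T x n| <= M * nK `|x|) ->
    (gamma_dual X [set g \o T | g in dual_ball_on (nat -> K) linf_set linf_norm]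
       <= C%:E * uc X (nat -> K) linf_norm T)%E.

Definition assertion2 (X : completeNormedModType K) (C : R) : Prop :=
  forall A : set (X -> K), bounded_dual_set X A ->
    (gamma_dual X A <= C%:E * eta X A)%E.

End BanachQuantities.

From Pilot Require Import Defs.
From HB Require Import structures.
From mathcomp Require Import all_boot all_order all_algebra.
From mathcomp Require Import all_classical all_reals all_analysis.
From mathcomp Require Import complex.
From mathcomp Require Import lra.
Import numFieldNormedType.Exports.
Import Order.TTheory GRing.Theory Num.Theory.
Local Open Scope classical_set_scope.
Local Open Scope ring_scope.
Set Implicit Arguments.
Unset Strict Implicit.

(* (2) => (1), (1'): put K = T^*(B_{Y^*}); since |y^*(T x)| <= ||T x|| and T x_k is the
   difference of two consecutive partial sums of (T x_i), one gets eta(K) <= uc(T).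
   (1') => (2): the functionals f_n of a gamma-witness in K define T x = (f_n x)_n into
   l^infty, and f_n = e_n^* o T with e_n^* the coordinate functionals, so the witness
   is one for gamma(T^* ); moreover uc(T) <= eta(K): if the partial sums of (T x_i) keep
   oscillating by more than r, one extracts far-out disjoint blocks u_j of the series
   with |f_(n_j) u_j| > r, and the u_j again form a wuc series.
   (1) => (1'): T factors through l^infty realised as a Banach space of bounded
   sequences, with the same dual ball and the same uc. *)

Lemma limn_esup_ge (R : realType) (u : nat -> \bar R) (a : \bar R) :
  (forall n, (a <= u n)%E) -> (a <= limn_esup u)%E.
Proof.
move=> au; apply: le_ereal_inf_tmp => _ [V [N _ NV] <-].
by apply: le_trans (au N) _; apply: ereal_sup_ubound; exists N => //; apply: NV => /=.
Qed.

Lemma lee_nonneg_real_lt (R : realType) (x y : \bar R) : (0 <= y)%E ->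
  (forall r : R, 0 <= r -> (r%:E < x)%E -> (r%:E <= y)%E) -> (x <= y)%E.
Proof.
move=> y0 xy; case: x xy => [c| |] xy; last by rewrite leNye.
- case: y y0 xy => [d| |] //; rewrite ?leey // lee_fin => d0 xy.
  rewrite lee_fin leNgt; apply/negP => dc.
  have : (((d + c) / 2)%:E <= d%:E)%E by apply: xy; rewrite ?lte_fin; lra.
  by rewrite lee_fin; lra.
- suff -> : y = +oo%E by [].
  apply: eq_infty => r; have [r0|r0] := leP 0 r; first exact: xy (ltry r).
  by apply: le_trans y0; rewrite lee_fin ltW.
Qed.

Lemma sum_ord_subE (V : zmodType) (F : nat -> V) (l k : nat) : (l < k)%N ->
  \sum_(i < k.+1) F i - \sum_(i < l.+1) F i = \sum_(l.+1 <= i < k.+1) F i.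
Proof.
move=> lk; rewrite -!(big_mkord xpredT) (@big_cat_nat _ _ _ l.+1) //=.
  by rewrite [X in X - _]addrC addrK.
by rewrite ltnS ltnW.
Qed.

Section SeqEval.
Variables (K : numFieldType) (X : lmodType K) (x : nat -> X -> K).
Hypothesis x_lin : forall n, linear_on K X setT (x n).

Definition seq_eval (v : X) : nat -> K := fun n => x n v.

Lemma seq_eval_is_linear : linear_for *:%R seq_eval.
Proof. by move=> a u v; apply/funext => n; rewrite /seq_eval x_lin. Qed.

HB.instance Definition _ :=
  GRing.isLinear.Build K X (nat -> K) *:%R seq_eval seq_eval_is_linear.

Definition seq_eval_linear : {linear X -> nat -> K} := seq_eval.

End SeqEval.

Section Scalars.
Variables (R : realType) (K : numFieldType) (nK : K -> R).

Lemma linf_norm_le (y : nat -> K) (M : R) :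
  (forall n, nK `|y n| <= M) -> linf_norm R K nK y <= M.
Proof.
move=> yM; apply: ge_sup; first by exists (nK `|y 0%N|), 0%N.
by move=> _ [n _ <-].
Qed.

Lemma linf_norm_ub (y : nat -> K) n : linf_set R K nK y -> nK `|y n| <= linf_norm R K nK y.
Proof.
move=> [M yM]; apply: ub_le_sup; last by exists n.
by exists M => _ [m _ <-].
Qed.

Lemma coord_dual_ball n :
  dual_ball_on R K nK (nat -> K) (linf_set R K nK) (linf_norm R K nK) (fun y => y n).
Proof. by split => [a y z _ _ //|y]; apply: linf_norm_ub. Qed.

Section LinearOn.
Variables (X : lmodType K) (f : X -> K).
Hypothesis f_lin : linear_on K X setT f.

Lemma linear_onD y z : f (y + z) = f y + f z.
Proof. by have := @f_lin 1 y z I I; rewrite scale1r mul1r. Qed.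

Lemma linear_on0 : f 0 = 0.
Proof. by apply: (@addrI _ (f 0)); rewrite -linear_onD !addr0. Qed.

Lemma linear_on_sum (I : Type) (s : seq I) (F : I -> X) :
  f (\sum_(i <- s) F i) = \sum_(i <- s) f (F i).
Proof.
elim: s => [|a s IH]; first by rewrite !big_nil linear_on0.
by rewrite !big_cons linear_onD IH.
Qed.

End LinearOn.

Lemma linear_on_comp (X Y : lmodType K) (T : {linear X -> Y}) (S : set Y) (g : Y -> K) :
  (forall x, S (T x)) -> linear_on K Y S g -> linear_on K X setT (g \o T).
Proof. by move=> ST g_lin a x y _ _ /=; rewrite linearP g_lin. Qed.

Lemma gamma_in_subset (E : Type) (Bd : set (E -> K)) (A B : set E) :
  A `<=` B -> (gamma_in R K nK E Bd A <= gamma_in R K nK E Bd B)%E.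
Proof.
move=> AB; apply: ereal_sup_le => r [x [phi [a1 [a2 [Ax [Bphi [lims ->]]]]]]].
by exists x, phi, a1, a2; split => // n; apply: AB.
Qed.

Lemma eta_le_uc (X : normedModType K) (Y : zmodType) (nY : Y -> R)
    (T : X -> Y) (A : set (X -> K)) :
  (forall f x, A f -> nK `|f x| <= nY (T x)) ->
  (Defs.eta R K nK X A <= uc R K nK X Y nY T)%E.
Proof.
move=> AT; apply: ge_ereal_sup => _ [x wx <-].
apply: (@le_trans _ _ (ca R Y nY (fun n => \sum_(i < n.+1) T (x i)))); last first.
  by apply: ereal_sup_ubound; exists x.
apply: le_ereal_inf_tmp => _ [N _ <-].
apply: (@le_trans _ _ (ereal_sup ((fun n => ereal_sup
    [set (nK `|f (x n)|)%:E | f in A]) @` [set k | (N < k)%N]))).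
  by apply: ereal_inf_lbound; exists [set k | (N < k)%N] => //; exists N.+1.
apply: ge_ereal_sup => _ [[//|k] /= Nk <-].
apply: ge_ereal_sup => _ [f Af <-].
apply: (@le_trans _ _ (nY (\sum_(i < k.+2) T (x i) - \sum_(i < k.+1) T (x i)))%:E).
  by rewrite lee_fin big_ord_recr /= addrC addrK; exact: AT.
by apply: ereal_sup_ubound; exists (k.+1, k) => //=; split => //; apply: ltnW.
Qed.

Lemma gamma_le_uc_of_assertion2 (X : completeNormedModType K) (C : R)
    (Y : lmodType K) (S : set Y) (nY : Y -> R) (T : {linear X -> Y}) (M : R) :
  0 <= C -> assertion2 R K nK X C ->
  (forall x, S (T x)) -> (forall x, nY (T x) <= M * nK `|x|) ->
  (gamma_dual R K nK X [set g \o T | g in dual_ball_on R K nK Y S nY]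
     <= C%:E * uc R K nK X Y nY T)%E.
Proof.
move=> C0 H2 ST TM.
have AT f x : [set g \o T | g in dual_ball_on R K nK Y S nY] f -> nK `|f x| <= nY (T x).
  by case=> g [_ gb] <-; apply: gb.
apply: le_trans (H2 _ _) _.
  split=> [_ [g [g_lin _] <-]|]; first exact: linear_on_comp g_lin.
  by exists M => f x Af; apply: le_trans (AT f x Af) (TM x).
by rewrite lee_wpmul2l ?lee_fin // eta_le_uc.
Qed.

Lemma assertion2_assertion1 (X : completeNormedModType K) (C : R) :
  0 <= C -> assertion2 R K nK X C -> assertion1 R K nK X C.
Proof. by move=> C0 H2 Y T [M TM]; exact: gamma_le_uc_of_assertion2 C0 H2 _ TM. Qed.

Lemma assertion2_assertion1' (X : completeNormedModType K) (C : R) :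
  0 <= C -> assertion2 R K nK X C -> assertion1' R K nK X C.
Proof.
move=> C0 H2 T [M TM]; apply: gamma_le_uc_of_assertion2 C0 H2 _ _ => x.
  by exists (M * nK `|x|).
exact: linf_norm_le.
Qed.

Section Seminorm.
Hypotheses (nK0 : nK 0 = 0) (nK_ge0 : forall a : K, 0 <= nK `|a|)
  (nK_triangle : forall a b : K, nK `|a + b| <= nK `|a| + nK `|b|).

Lemma nK_sum (I : Type) (s : seq I) (F : I -> K) :
  nK `|\sum_(i <- s) F i| <= \sum_(i <- s) nK `|F i|.
Proof.
elim: s => [|a s IH]; first by rewrite !big_nil normr0 nK0.
by rewrite !big_cons; apply: le_trans (nK_triangle _ _) _; rewrite lerD2l.
Qed.

Lemma eta_ge0 (X : normedModType K) (A : set (X -> K)) f :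
  A f -> linear_on K X setT f -> (0 <= Defs.eta R K nK X A)%E.
Proof.
move=> Af f_lin; apply: (@le_trans _ _ (limn_esup (fun n =>
    ereal_sup [set (nK `|g (0 : X)|)%:E | g in A]))); last first.
  apply: ereal_sup_ubound; exists (fun _ => 0) => //.
  by move=> g [g_lin _] /=; rewrite linear_on0 // normr0 nK0 eseries0.
apply: limn_esup_ge => n; apply: (@le_trans _ _ (nK `|f 0|)%:E).
  by rewrite linear_on0 // normr0 nK0.
by apply: ereal_sup_ubound; exists f.
Qed.

Lemma wuc_block_sums (X : normedModType K) (z : nat -> X) (l k : nat -> nat) :
  (forall j, (l j <= k j)%N) -> (forall j, (k j <= l j.+1)%N) ->
  wuc R K nK X z -> wuc R K nK X (fun j => \sum_(l j <= i < k j) z i).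
Proof.
move=> lk kl wz f [f_lin fb].
have partial J : \sum_(j < J) nK `|f (\sum_(l j <= i < k j) z i)|
    <= \sum_(0 <= i < l J) nK `|f (z i)|.
  elim: J => [|J IH]; first by rewrite big_ord0 sumr_ge0.
  rewrite big_ord_recr /= (@big_cat_nat _ _ _ (l J) 0 (l J.+1)) ?(leq_trans (lk J)) //=.
  rewrite (@big_cat_nat _ _ _ (k J) (l J) (l J.+1)) //=.
  apply: lerD => //.
  apply: (@le_trans _ _ (\sum_(l J <= i < k J) nK `|f (z i)|)).
    by rewrite linear_on_sum //; exact: nK_sum.
  by rewrite lerDl sumr_ge0.
have nneg n : (0 <= (nK `|f (z n)|)%:E)%E by rewrite lee_fin.
apply: (@lime_le _ _ _ _ 1%E); first by apply: is_cvg_nneseries => n _ _; rewrite lee_fin.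
apply: nearW => J; rewrite sumEFin big_mkord.
apply: le_trans (wz f (conj f_lin fb)).
apply: le_trans (nneseries_lim_ge (l J) (fun n _ _ => nneg n)).
by rewrite sumEFin lee_fin.
Qed.

Lemma ca_gt_block (X : normedModType K) (x : nat -> X -> K) (z : nat -> X) (r : R) :
  (forall n, linear_on K X setT (x n)) -> 0 <= r ->
  (r%:E < ca R (nat -> K) (linf_norm R K nK)
            (fun m => (\sum_(i < m.+1) seq_eval x (z i))%R))%E ->
  forall N, exists lk : nat * nat, (N <= lk.1 < lk.2)%N /\
    exists n, r < nK `|x n (\sum_(lk.1.+1 <= i < lk.2.+1) z i)|.
Proof.
move=> x_lin r0 rca N.
set S := fun m => \sum_(i < m.+1) seq_eval x (z i).
have : (r%:E < ereal_sup [set (linf_norm R K nK (S ab.1 - S ab.2)%R)%:E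
    | ab in [set ab : nat * nat | (N <= ab.1)%N /\ (N <= ab.2)%N]])%E.
  by apply: lt_le_trans rca _; apply: ereal_inf_lbound; exists N.
case/ereal_sup_gt => _ [[a b] /= [Na Nb] <-]; rewrite lte_fin => r_lt.
have [n] : exists n, r < nK `|S a n - S b n|.
  apply/not_existsP => ge; move: r_lt; rewrite ltNge (@linf_norm_le _ r) //.
  by move=> n; rewrite leNgt; apply/negP/ge.
rewrite /S !fct_sumE /seq_eval.
have [ab|ba|->] := ltngtP a b.
- rewrite -opprB normrN (sum_ord_subE (fun i => x n (z i))) // -linear_on_sum //.
  by exists (a, b); split; [rewrite Na | exists n].
- rewrite (sum_ord_subE (fun i => x n (z i))) // -linear_on_sum //.
  by exists (b, a); split; [rewrite Nb | exists n].
- by rewrite subrr normr0 nK0 ltNge r0.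
Qed.

Lemma uc_seq_eval_le_eta (X : normedModType K) (x : nat -> X -> K) (A : set (X -> K)) :
  (forall n, linear_on K X setT (x n)) -> (forall n, A (x n)) ->
  (uc R K nK X (nat -> K) (linf_norm R K nK) (seq_eval x) <= Defs.eta R K nK X A)%E.
Proof.
move=> x_lin Ax; apply: ge_ereal_sup => _ [z wz <-].
apply: lee_nonneg_real_lt; first exact: (eta_ge0 (Ax 0%N) (x_lin 0%N)).
move=> r r0 /(ca_gt_block x_lin r0) block; have [g gP] := choice block.
pose N j := iter j (fun M => (g M).2.+1) 0%N.
pose u j := \sum_((g (N j)).1.+1 <= i < (g (N j)).2.+1) z i.
have wu : wuc R K nK X u.
  apply: wuc_block_sums => // j.
    by have [/andP [_ lk] _] := gP (N j); rewrite ltnS ltnW.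
  by have [/andP [Nl _] _] := gP (N j.+1); exact: leqW.
apply: (@le_trans _ _ (limn_esup (fun j =>
    ereal_sup [set (nK `|f (u j)|)%:E | f in A]))); last first.
  by apply: ereal_sup_ubound; exists u.
apply: limn_esup_ge => j; have [_ [n rn]] := gP (N j).
apply: (@le_trans _ _ (nK `|x n (u j)|)%:E); first by rewrite lee_fin ltW.
by apply: ereal_sup_ubound; exists (x n).
Qed.

Lemma assertion1'_assertion2 (X : completeNormedModType K) (C : R) :
  0 <= C -> assertion1' R K nK X C -> assertion2 R K nK X C.
Proof.
move=> C0 H1 A [A_lin [M AM]].
apply: ge_ereal_sup => _ [x [phi [a1 [a2 [Ax [phiB [lims ->]]]]]]].
have x_lin n : linear_on K X setT (x n) := A_lin _ (Ax n).
set T := seq_eval_linear x_lin.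
apply: (@le_trans _ _ (gamma_dual R K nK X [set g \o T
    | g in dual_ball_on R K nK (nat -> K) (linf_set R K nK) (linf_norm R K nK)])).
  apply: ereal_sup_ubound; exists x, phi, a1, a2; split => // n.
  by exists (fun y => y n); [exact: coord_dual_ball | apply/funext].
apply: le_trans (H1 T _) _; first by exists M => v n; exact: AM.
apply: lee_wpmul2l; first by rewrite lee_fin.
exact: uc_seq_eval_le_eta.
Qed.

End Seminorm.
End Scalars.

(* The norm of K is real-valued: [emb] embeds R and [nK] reads the norm back in R
   (for K = R[i], [emb] is the inclusion and [nK] is [Re]). *)
Section LinfSpace.
Variables (R : realType) (K : numFieldType) (nK : K -> R) (emb : {rmorphism R -> K}).
Hypotheses (embK : forall r, nK (emb r) = r)
  (normE : forall k : K, `|k| = emb (nK `|k|))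
  (emb_le : forall r s, (emb r <= emb s) = (r <= s)).

Local Notation bounded := (linf_set R K nK).
Local Notation lnorm := (linf_norm R K nK).

Lemma nK0 : nK 0 = 0.
Proof. by rewrite -(rmorph0 emb) embK. Qed.

Lemma nK_ge0 (a : K) : 0 <= nK `|a|.
Proof. by rewrite -emb_le rmorph0 -normE. Qed.

Lemma nK_triangle (a b : K) : nK `|a + b| <= nK `|a| + nK `|b|.
Proof. by rewrite -emb_le rmorphD -!normE ler_normD. Qed.

Lemma nK_mul (a b : K) : nK `|a * b| = nK `|a| * nK `|b|.
Proof. by rewrite normrM {1}(normE a) {1}(normE b) -rmorphM embK. Qed.

Lemma nK_eq0 (a : K) : nK `|a| = 0 -> a = 0.
Proof. by move=> a0; apply/normr0_eq0; rewrite normE a0 rmorph0. Qed.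

Lemma emb_lt r s : r < s -> emb r < emb s.
Proof.
move=> rs; rewrite lt_def emb_le (ltW rs) andbT; apply/eqP => rs_eq.
by move: rs; rewrite -(embK r) -(embK s) rs_eq ltxx.
Qed.

Lemma emb_gt0 r : 0 < r -> 0 < emb r.
Proof. by rewrite -(rmorph0 emb); exact: emb_lt. Qed.

Lemma linf_norm_ge0 (y : nat -> K) : bounded y -> 0 <= lnorm y.
Proof. by move=> yb; apply: le_trans (linf_norm_ub 0 yb); exact: nK_ge0. Qed.

Lemma linf_setD (y z : nat -> K) : bounded y -> bounded z -> bounded (y + z).
Proof.
move=> [M yM] [N zN]; exists (M + N) => n.
by apply: le_trans (nK_triangle _ _) _; apply: lerD.
Qed.

Lemma linf_setZ (a : K) (y : nat -> K) : bounded y -> bounded (a *: y).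
Proof.
move=> [M yM]; exists (nK `|a| * M) => n /=.
by rewrite nK_mul; apply: ler_wpM2l; [exact: nK_ge0 | exact: yM].
Qed.

Lemma linf_set0 : bounded 0.
Proof. by exists 0 => n; rewrite normr0 nK0. Qed.

Record linf := Linf { lval : nat -> K; lvalP : bounded lval }.

Lemma lval_inj (y z : linf) : lval y = lval z -> y = z.
Proof.
case: y z => [y yb] [z zb] /= yz; subst z.
by rewrite (Prop_irrelevance yb zb).
Qed.

HB.instance Definition _ := gen_eqMixin linf.
HB.instance Definition _ := gen_choiceMixin linf.

Definition linf_zero := Linf linf_set0.
Definition linf_add (y z : linf) := Linf (linf_setD (lvalP y) (lvalP z)).
Definition linf_opp (y : linf) := Linf (linf_setZ (-1) (lvalP y)).
Definition linf_scale (a : K) (y : linf) := Linf (linf_setZ a (lvalP y)).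

Lemma linf_addA : associative linf_add.
Proof. by move=> x y z; apply: lval_inj; rewrite /= addrA. Qed.
Lemma linf_addC : commutative linf_add.
Proof. by move=> x y; apply: lval_inj; rewrite /= addrC. Qed.
Lemma linf_add0 : left_id linf_zero linf_add.
Proof. by move=> x; apply: lval_inj; rewrite /= add0r. Qed.
Lemma linf_addN : left_inverse linf_zero linf_opp linf_add.
Proof. by move=> x; apply: lval_inj; rewrite /= scaleN1r addNr. Qed.

HB.instance Definition _ :=
  GRing.isZmodule.Build linf linf_addA linf_addC linf_add0 linf_addN.

Lemma linf_scaleA a b v : linf_scale a (linf_scale b v) = linf_scale (a * b) v.
Proof. by apply: lval_inj; rewrite /= scalerA. Qed.
Lemma linf_scale1 : left_id 1 linf_scale.
Proof. by move=> v; apply: lval_inj; rewrite /= scale1r. Qed.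
Lemma linf_scaleDr : right_distributive linf_scale +%R.
Proof. by move=> a u v; apply: lval_inj; rewrite /= scalerDr. Qed.
Lemma linf_scaleDl v : {morph linf_scale^~ v : a b / a + b}.
Proof. by move=> a b; apply: lval_inj; rewrite /= scalerDl. Qed.

HB.instance Definition _ := GRing.Zmodule_isLmodule.Build K linf
  linf_scaleA linf_scale1 linf_scaleDr linf_scaleDl.

Lemma lvalD (y z : linf) : lval (y + z) = lval y + lval z. Proof. by []. Qed.
Lemma lvalZ a (y : linf) : lval (a *: y) = a *: lval y. Proof. by []. Qed.
Lemma lvalB (y z : linf) : lval (y - z) = lval y - lval z.
Proof. by rewrite lvalD /= scaleN1r. Qed.

Lemma lval_sum (I : Type) (s : seq I) (F : I -> linf) :
  lval (\sum_(i <- s) F i) = \sum_(i <- s) lval (F i).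
Proof. by elim: s => [|a s IH]; rewrite ?big_nil // !big_cons lvalD IH. Qed.

Lemma linf_coord_le (y : linf) n : nK `|lval y n| <= lnorm (lval y).
Proof. exact/linf_norm_ub/lvalP. Qed.

Lemma linf_normD (y z : linf) :
  lnorm (lval (y + z)) <= lnorm (lval y) + lnorm (lval z).
Proof.
apply: linf_norm_le => n; apply: le_trans (nK_triangle _ _) _.
by apply: lerD; exact: linf_coord_le.
Qed.

Lemma linf_normZ a (y : linf) : lnorm (lval (a *: y)) = nK `|a| * lnorm (lval y).
Proof.
have coordZ n : nK `|lval (a *: y) n| = nK `|a| * nK `|lval y n| by rewrite -nK_mul.
apply/le_anti/andP; split.
  apply: linf_norm_le => n; rewrite coordZ.
  by apply: ler_wpM2l; [exact: nK_ge0 | exact: linf_coord_le].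
have [->|a0] := eqVneq (nK `|a|) 0; first by rewrite mul0r; exact/linf_norm_ge0/lvalP.
have a_pos : 0 < nK `|a| by rewrite lt_def a0 nK_ge0.
rewrite -ler_pdivlMl //; apply: linf_norm_le => n.
by rewrite ler_pdivlMl // -coordZ; exact: linf_coord_le.
Qed.

Definition linf_normK (y : linf) : K := emb (lnorm (lval y)).

Lemma linf_normK_triangle (y z : linf) : linf_normK (y + z) <= linf_normK y + linf_normK z.
Proof. by rewrite /linf_normK -rmorphD emb_le linf_normD. Qed.

Lemma linf_normKZ (a : K) (y : linf) : linf_normK (a *: y) = `|a| * linf_normK y.
Proof. by rewrite /linf_normK linf_normZ rmorphM -normE. Qed.

Lemma linf_normK_eq0 (y : linf) : linf_normK y = 0 -> y = 0.
Proof.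
move=> /(congr1 nK); rewrite embK -(rmorph0 emb) embK => y0.
apply: lval_inj; apply/funext => n; apply: nK_eq0; apply/le_anti.
by rewrite nK_ge0 andbT -y0 linf_coord_le.
Qed.

HB.instance Definition _ :=
  Lmodule_isNormed.Build K linf linf_normK_triangle linf_normKZ linf_normK_eq0.

Lemma linf_normE (y : linf) : `|y| = emb (lnorm (lval y)). Proof. by []. Qed.

Hypothesis K_complete : forall F : set_system K, ProperFilter F -> cauchy F -> cvg F.

Section LinfComplete.
Variable F : set_system linf.
Hypotheses (FF : ProperFilter F) (Fc : cauchy_ball F).

Lemma linf_coord_cvg n : cvg ((fun y : linf => lval y n) @ F).
Proof.
apply: K_complete; apply/cauchy_ballP => e e0; rewrite near_map2.
apply: filterS (Fc e0) => -[y z] /=; rewrite -!ball_normE /= => yz.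
apply: le_lt_trans yz; rewrite linf_normE normE emb_le.
have -> : lval y n - lval z n = lval (y - z) n by rewrite lvalB.
exact: linf_coord_le.
Qed.

Let c n := lim ((fun y : linf => lval y n) @ F).

Lemma linf_coord_unif (d : R) : 0 < d ->
  \forall y \near F, forall n, nK `|c n - lval y n| <= d.
Proof.
move=> d0; have ed0 := emb_gt0 d0.
near=> w => m; apply/ler_addgt0Pr => eps eps0.
have /cvgrPdist_lt /(_ _ (emb_gt0 eps0)) cm := @linf_coord_cvg m.
near F => z.
have cz : `|c m - lval z m| < emb eps by near: z.
have wz : ball w (emb d) z by near: z; near: w; apply: nearP_dep; apply: Fc.
move: wz cz; rewrite -ball_normE /= linf_normE normE => /ltW wz /ltW.
rewrite emb_le => cz; rewrite emb_le in wz.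
rewrite -(subrK (lval z m) (c m)) -addrA addrC.
apply: le_trans (nK_triangle _ _) _; apply: lerD => //.
apply: le_trans wz; rewrite -normrN opprB.
have -> : lval w m - lval z m = lval (w - z) m by rewrite lvalB.
exact: linf_coord_le.
Unshelve. all: by end_near.
Qed.

Lemma linf_lim_bounded : bounded c.
Proof.
have [y yc] := filter_ex (linf_coord_unif ltr01).
exists (1 + lnorm (lval y)) => n; rewrite -(subrK (lval y n) (c n)).
by apply: le_trans (nK_triangle _ _) _; apply: lerD; [exact: yc | exact: linf_coord_le].
Qed.

Lemma linf_cauchy_cvg : cvg F.
Proof.
apply/cvg_ex; exists (Linf linf_lim_bounded); apply/fcvgrPdist_lt => e e0.
have e_pos : 0 < nK `|e|.
  by rewrite lt_def nK_ge0 andbT; apply: contraTneq e0 => /nK_eq0 ->; rewrite ltxx.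
have eE : e = emb (nK `|e|) by rewrite -normE gtr0_norm.
have e2_pos : 0 < nK `|e| / 2 by rewrite divr_gt0.
have := linf_coord_unif e2_pos; apply: filterS => w cw.
rewrite [X in _ < X]eE linf_normE; apply: emb_lt.
apply: le_lt_trans (_ : nK `|e| / 2 < nK `|e|); last by rewrite ltr_pdivrMr // ltr_pMr // ltr1n.
by apply: linf_norm_le => m; rewrite lvalB; exact: cw.
Qed.

End LinfComplete.

Lemma linf_complete (F : set_system linf) : ProperFilter F -> cauchy F -> cvg F.
Proof. by move=> FF /cauchy_ballP; exact: linf_cauchy_cvg. Qed.

HB.instance Definition _ := Uniform_isComplete.Build linf linf_complete.

Section ToLinf.
Variables (X : normedModType K) (T : {linear X -> nat -> K}) (M : R).
Hypothesis TM : forall x n, nK `|T x n| <= M * nK `|x|.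

Definition to_linf (x : X) : linf := Linf (ex_intro _ (M * nK `|x|) (TM x) : bounded (T x)).

Lemma to_linf_is_linear : linear_for *:%R to_linf.
Proof. by move=> a u v; apply: lval_inj; rewrite /= linearP. Qed.

HB.instance Definition _ := GRing.isLinear.Build K X linf *:%R to_linf to_linf_is_linear.

Definition to_linf_linear : {linear X -> linf} := to_linf.

End ToLinf.

Lemma assertion1_assertion1' (X : completeNormedModType K) (C : R) :
  assertion1 R K nK X C -> assertion1' R K nK X C.
Proof.
move=> H1 T [M TM]; set T' := to_linf_linear TM.
have -> : uc R K nK X (nat -> K) lnorm T = uc R K nK X linf (fun y => nK `|y|) T'.
  congr ereal_sup; apply: eq_imagel => x _; congr ereal_inf.
  apply: eq_imagel => N _; congr ereal_sup; apply: eq_imagel => kl _.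
  by rewrite linf_normE embK lvalB !lval_sum.
apply: le_trans (H1 _ T' _); last first.
  by exists M => v; rewrite linf_normE embK; apply: linf_norm_le; exact: TM.
apply: gamma_in_subset => _ [g [g_lin gb] <-].
exists (fun y : linf => g (lval y)); last exact/funext.
split=> [a y z _ _|y _]; first by rewrite lvalD lvalZ g_lin //; exact: lvalP.
by rewrite linf_normE embK; apply: gb; exact: lvalP.
Qed.

Lemma assertions_equivalent (X : completeNormedModType K) (C : R) : 0 < C ->
  (assertion1 R K nK X C <-> assertion1' R K nK X C) /\
  (assertion1' R K nK X C <-> assertion2 R K nK X C).
Proof.
move=> /ltW C0; have A2A1' := assertion1'_assertion2 nK0 nK_ge0 nK_triangle C0.
split; split; [exact: assertion1_assertion1'| |exact: A2A1'|].
- by move=> /A2A1'; exact: assertion2_assertion1.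
- exact: assertion2_assertion1'.
Qed.

End LinfSpace.

Section ComplexComplete.
Variable R : realType.
Local Open Scope complex_scope.

Lemma Re_le_normc (z : R[i]) : `|complex.Re z| <= complex.Re `|z|.
Proof. by rewrite normc_def -sqrtr_sqr ler_wsqrtr // lerDl sqr_ge0. Qed.

Lemma Im_le_normc (z : R[i]) : `|complex.Im z| <= complex.Re `|z|.
Proof. by rewrite normc_def -sqrtr_sqr ler_wsqrtr // lerDr sqr_ge0. Qed.

Lemma normc_le_Re_Im (u v : R) : complex.Re `|u +i* v| <= `|u| + `|v|.
Proof.
rewrite normc_def /= -[X in _ <= X]ger0_norm ?addr_ge0 // -sqrtr_sqr.
apply: ler_wsqrtr; rewrite sqrrD !real_normK ?num_real //.
have : 0 <= `|u| * `|v| by rewrite mulr_ge0.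
lra.
Qed.

Lemma complex_complete (F : set_system (R[i] : numFieldType)) : ProperFilter F -> cauchy F -> cvg F.
Proof.
move=> FF /cauchy_ballP Fc.
have coord_cvg (p : R[i] -> R) : (forall z, `|p z| <= complex.Re `|z|) ->
    {morph p : z w / z - w} -> cvg (p @ F).
  move=> p_le pB; apply: cauchy_cvg; apply/cauchy_ballP => e e0.
  rewrite near_map2; have /Fc : 0 < e%:C by rewrite ltcR.
  apply: filterS => -[z w] /=; rewrite -!ball_normE /= ltcE => /andP [_].
  by apply: le_lt_trans; rewrite -pB p_le.
have /cvgrPdist_lt cRe : cvg (@complex.Re R @ F).
  by apply: coord_cvg Re_le_normc _ => -[? ?] [? ?].
have /cvgrPdist_lt cIm : cvg (@complex.Im R @ F).
  by apply: coord_cvg Im_le_normc _ => -[? ?] [? ?].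
apply/cvg_ex; exists (lim (@complex.Re R @ F) +i* lim (@complex.Im R @ F)).
apply/fcvgrPdist_lt => e; rewrite ltcE /= => /andP [/eqP Ie e0].
have e2 : 0 < complex.Re e / 2 by rewrite divr_gt0.
apply: filterS2 (cRe _ e2) (cIm _ e2) => -[zr zi] /= ltr lti.
rewrite ltcE Ie normc_def eqxx /=.
by apply: le_lt_trans (normc_le_Re_Im _ _) _; lra.
Qed.

End ComplexComplete.

Theorem proposition3p3 (R : realType) :
  (forall (X : completeNormedModType R) (C : R), 0 < C ->
     (assertion1 R R idfun X C <-> assertion1' R R idfun X C) /\
     (assertion1' R R idfun X C <-> assertion2 R R idfun X C)) /\
  (forall (X : completeNormedModType R[i]) (C : R), 0 < C ->
     (assertion1 R R[i] (@complex.Re R) X C <-> assertion1' R R[i] (@complex.Re R) X C) /\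
     (assertion1' R R[i] (@complex.Re R) X C <-> assertion2 R R[i] (@complex.Re R) X C)).
Proof.
split=> X C.
- apply: (@assertions_equivalent R R idfun idfun) => // F FF.
  exact: cauchy_cvg.
- apply: (@assertions_equivalent R R[i] (@complex.Re R) (real_complex R)) => //.
    by move=> r s; rewrite lecR.
  exact: complex_complete.
Qed.
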